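(* Let $a,b,\lambda,N\in\mathbb N$ and $$M_N(a,b,\lambda)=\int_{[-1/2,1/2]^N}\prod_{l=1}^N e^{\pi i\theta_l(a-b)}\bigl|1+e^{2\pi i\theta_l}\bigr|^{a+b}\prod_{1\le k<l\le N}\bigl|e^{2\pi i\theta_k}-e^{2\pi i\theta_l}\bigr|^{2\lambda}\,d\theta.$$ Then $$M_N(a,b,\lambda)=\sum_{\substack{I_{kl}=-\lambda\\ 1\le k<l\le N}}^{\lambda}(-1)^{\sum_{k<l}I_{kl}}\prod_{1\le k<l\le N}\binom{2\lambda}{\lambda+I_{kl}}\prod_{k=1}^N\binom{a+b}{a+\sum_{l\ne k}I_{kl}}.$$
   Context: The sum runs over all families of integers $I_{kl}\in\{-\lambda,\dots,\lambda\}$, one for each pair $1\le k<l\le N$, with the convention $I_{kl}:=-I_{lk}$ for $k>l$. Binomial coefficients $\binom{r}{j}$ with $j<0$ or $j>r$ are zero. *)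

From Stdlib Require Import Reals.
From Coquelicot Require Import Coquelicot.
From mathcomp Require Import all_boot all_algebra.

Set Implicit Arguments.
Unset Strict Implicit.
Unset Printing Implicit Defensive.

Definition cis (x : R) : C := (cos x, sin x).

Definition Cprod (s : list nat) (f : nat -> C) : C :=
  List.fold_right (fun i acc => Cmult (f i) acc) (RtoC 1) s.

(* The integrand, with variables theta_1..theta_N stored as th 0 .. th (N-1):
   prod_l e^{pi i theta_l (a-b)} |1+e^{2 pi i theta_l}|^{a+b}
   * prod_{k<l} |e^{2 pi i theta_k} - e^{2 pi i theta_l}|^{2 lambda}. *)
Definition integrand (N a b lam : nat) (th : nat -> R) : C :=
  Cmult
    (Cprod (iota 0 N) (fun l =>
       Cmult (cis (Rmult (Rmult PI (th l)) (Rminus (INR a) (INR b))))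
             (RtoC (pow (Cmod (Cplus (RtoC 1) (cis (Rmult (Rmult 2 PI) (th l))))) (a + b)))))
    (Cprod (iota 0 N) (fun k =>
       Cprod (iota k.+1 (N - k.+1)) (fun l =>
         RtoC (pow (Cmod (Cminus (cis (Rmult (Rmult 2 PI) (th k)))
                                 (cis (Rmult (Rmult 2 PI) (th l))))) (2 * lam))))).

(* Iterated integral over [-1/2,1/2]^n of a real function of the
   coordinates th 0, ..., th (n-1) (Fubini: for continuous integrands this is
   the integral over the cube).  Coordinate m is the outermost at level m+1. *)
Fixpoint iint (n : nat) (f : (nat -> R) -> R) : R :=
  match n with
  | O => f (fun _ => R0)
  | S m => RInt (fun t => iint m (fun x => f (fun i => if Nat.eqb i m then t else x i)))
                (Ropp (Rdiv 1 2)) (Rdiv 1 2)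
  end.

Definition MN (N a b lam : nat) : C :=
  (iint N (fun th => Re (integrand N a b lam th)),
   iint N (fun th => Im (integrand N a b lam th))).

Import GRing.Theory Num.Theory.
Local Open Scope ring_scope.

Definition pairs (N : nat) := {p : 'I_N * 'I_N | (p.1 < p.2)%N}.

(* A family (I_kl)_{k<l} with values in {-lam..lam} is encoded by
   f : pairs N -> 'I_(2 lam + 1), via I_kl = f(k,l) - lam. *)
Definition family (N lam : nat) := {ffun pairs N -> 'I_(2 * lam + 1)}.

Definition Ipair (N lam : nat) (f : family N lam) (p : pairs N) : int :=
  (f p)%:Z - lam%:Z.

(* I_kl for arbitrary k,l, with the convention I_kl = - I_lk for k > l *)
Definition Ival (N lam : nat) (f : family N lam) (k l : 'I_N) : int :=
  if (insub (k, l) : option (pairs N)) is Some p then Ipair f p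
  else if (insub (l, k) : option (pairs N)) is Some p then - Ipair f p
  else 0.

(* binomial coefficient binom(r, j) for integer j, zero when j < 0 or j > r *)
Definition binZ (r : nat) (j : int) : int :=
  match j with
  | Posz n => ('C(r, n))%:Z
  | Negz _ => 0
  end.

Definition Msum (N a b lam : nat) : int :=
  \sum_(f : family N lam)
     ((-1) ^ (\sum_(p : pairs N) Ipair f p)
      * \prod_(p : pairs N) binZ (2 * lam) (lam%:Z + Ipair f p)
      * \prod_(k < N) binZ (a + b) (a%:Z + \sum_(l < N | l != k) Ival f k l)).

Definition int_to_R (z : int) : R :=
  match z with
  | Posz n => INR n
  | Negz n => Ropp (INR n.+1)
  end.

(* Put z_k = e^{2 pi i theta_k}.  On the open cube cos(pi theta_k) > 0, so
   e^{pi i theta (a-b)} |1 + z|^{a+b} = (1 + z)^{a+b} z^{-b}, and since |z_k| = 1,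
   |z_k - z_l|^2 = (z_k - z_l)(1/z_k - 1/z_l) = -(z_k - z_l)^2 / (z_k z_l).  Expanding by the
   binomial theorem writes the integrand as an integer Laurent polynomial in the z_k,
   with one term for each family (I_kl) and each choice of exponents j_k.  Integrating
   over the cube keeps only the constant term; its vanishing exponent conditions
   a - j_k + sum_{l <> k} I_kl = 0 determine the j_k, which turns the binomial factors
   of the first product into the ones of the statement. *)

From HB Require Import structures.
From Stdlib Require Import Reals Lra FunctionalExtensionality.
From Coquelicot Require Import Coquelicot.
From mathcomp Require Import all_boot all_algebra.
From mathcomp Require Import Rstruct zify.
(* MathComp's [ring] and [field] are imported only in the section on abstract fields;
   everywhere else [ring] and [field] are Stdlib's, acting on [R]. *)
From mathcomp Require ring.
(* Last, so that [family] is the one of [Defs] and not finfun's notation. *)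
From Pilot Require Import Defs.

Set Implicit Arguments.
Unset Strict Implicit.
Unset Printing Implicit Defensive.
Import GRing.Theory.

Delimit Scope ring_scope with ring.
Delimit Scope R_scope with R.
Local Open Scope ring_scope.

Section LaurentExpansion.
Import mathcomp.algebra_tactics.ring.
Variable F : fieldType.

Lemma expfz_subn (z : F) (m n : nat) : z != 0 -> z ^ (m%:Z - n%:Z) = z ^+ m / z ^+ n.
Proof. by move=> z0; rewrite expfzDr // -exprnN. Qed.

Lemma addr1_exprD_Laurent (z : F) (a b : nat) : z != 0 ->
  (z + 1) ^+ (a + b) / z ^+ b = \sum_(i < (a + b).+1) 'C(a + b, i)%:R * z ^ (a%:Z - i%:Z).
Proof.
move=> z0; rewrite exprDn mulr_suml; apply: eq_bigr => i _.
have -> : a%:Z - i%:Z = (a + b - i)%N%:Z - b%:Z by have := ltn_ord i; lia.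
by rewrite expfz_subn // expr1n mulr1 mulr_natl mulrnAl.
Qed.

Lemma signr_absz_subn (lam i : nat) : (i <= 2 * lam)%N ->
  (-1) ^+ `|i%:Z - lam%:Z| = (-1) ^+ lam * (-1) ^+ (2 * lam - i) :> F.
Proof.
move=> le_i2lam; rewrite -exprD.
have [c ->] : exists c, (lam + (2 * lam - i) = `|i%:Z - lam%:Z| + 2 * c)%N.
  by exists (if (i <= lam)%N then lam else (2 * lam - i)%N); case: leqP => ?; lia.
by rewrite exprD exprM sqrrN !expr1n mulr1.
Qed.

Lemma subr_mul_subrV_Laurent (u v : F) (lam : nat) : u != 0 -> v != 0 ->
  ((u - v) * (u^-1 - v^-1)) ^+ lam =
  \sum_(i < 2 * lam + 1)
    ((-1) ^ (i%:Z - lam%:Z) * binZ (2 * lam) (lam%:Z + (i%:Z - lam%:Z)))%:~R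
      * u ^ (i%:Z - lam%:Z) * v ^ (- (i%:Z - lam%:Z)).
Proof.
move=> u0 v0.
have -> : (u - v) * (u^-1 - v^-1) = - (u - v) ^+ 2 / (u * v) by field; rewrite u0 v0.
rewrite exprMn exprNn -exprM (addrC u) exprDn mulr_sumr mulr_suml addn1.
apply: eq_bigr => i _; have le_i2lam : (i <= 2 * lam)%N by rewrite -ltnS.
have -> : lam%:Z + (i%:Z - lam%:Z) = i%:Z by rewrite addrC subrK.
have -> : - (i%:Z - lam%:Z) = (2 * lam - i)%N%:Z - lam%:Z by lia.
rewrite !expfz_subn // intrM expN1r rmorphXn rmorphN1 /= signr_absz_subn //.
rewrite [(- v) ^+ _]exprNn pmulrn -mulrzl exprVn exprMn.
by field; rewrite !expf_neq0.
Qed.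

End LaurentExpansion.

Lemma prod_pairs (R : comPzSemiRingType) (N : nat) (F : 'I_N -> 'I_N -> R) :
  \prod_(p : pairs N) F (val p).1 (val p).2 = \prod_(k < N) \prod_(l < N | (k < l)%N) F k l.
Proof.
rewrite pair_big_dep [RHS](reindex_omap (val : pairs N -> 'I_N * 'I_N) insub) /=.
  by apply: eq_bigl => p; rewrite valK eqxx andbT (valP p).
by move=> kl lt_kl; rewrite insubT.
Qed.

Lemma sum_binomial_fiber (r : nat) (m : int) :
  \sum_(x < r.+1 | x%:Z == m) 'C(r, x)%:Z = binZ r m.
Proof.
rewrite -(big_mkord (fun x : nat => x%:Z == m) (fun x => 'C(r, x)%:Z)).
case: m => [n|n] /=; last by rewrite big_pred0.
under eq_bigl do rewrite eqz_nat.
rewrite big_nat1_eq; case: ifP => //= /negbT; rewrite ltnS -ltnNge => lt_rn.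
by rewrite bin_small.
Qed.

Section Families.
Variables (N lam : nat) (f : family N lam).

Definition Ival_rowsum (k : 'I_N) : int := \sum_(l < N | l != k) Ival f k l.

Lemma Ival_pair (p : pairs N) : Ival f (val p).1 (val p).2 = Ipair f p.
Proof. by case: p => [[k l] lt_kl]; rewrite /Ival insubT /=; congr Ipair; apply: val_inj. Qed.

Lemma Ival_antisym (k l : 'I_N) : (l < k)%N -> Ival f k l = - Ival f l k.
Proof. by move=> lt_lk; rewrite /Ival insubF ?insubT //= ltnNge ltnW. Qed.

Lemma prod_exprz_Ival_rowsum (F : fieldType) (z : 'I_N -> F) : (forall k, z k != 0) ->
  \prod_(k < N) z k ^ Ival_rowsum k =
  \prod_(p : pairs N) (z (val p).1 ^ Ipair f p * z (val p).2 ^ (- Ipair f p)).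
Proof.
move=> z_neq0.
have rowE k : z k ^ Ival_rowsum k =
    \prod_(l < N | (k < l)%N) z k ^ Ival f k l * \prod_(l < N | (l < k)%N) z k ^ Ival f k l.
  rewrite (big_morph (fun e => z k ^ e) (fun m n => expfzDr m n (z_neq0 k)) (expr0z _)).
  rewrite (bigID (fun l : 'I_N => (k < l)%N)) /=.
  by congr (_ * _); apply: eq_bigl => l; rewrite -(inj_eq val_inj) /=; case: ltngtP.
rewrite (eq_bigr _ (fun k _ => rowE k)) !big_split /=; congr (_ * _).
  by rewrite -(prod_pairs (fun k l => z k ^ Ival f k l)); apply: eq_bigr => p _; rewrite Ival_pair.
rewrite (exchange_big_dep xpredT) //=.
transitivity (\prod_(l < N) \prod_(k < N | (l < k)%N) z k ^ (- Ival f l k)).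
  by apply: eq_bigr => l _; apply: eq_bigr => k lt_lk; rewrite Ival_antisym.
by rewrite -(prod_pairs (fun l k => z k ^ (- Ival f l k))); apply: eq_bigr => p _; rewrite Ival_pair.
Qed.

End Families.

(* The field structure is declared on Coquelicot's [C] itself (not on a copy), so that
   on the complex terms of [Defs] [x * y] is [Cmult x y]. *)
HB.instance Definition _ := Choice.copy C (R * R)%type.

Fact CplusA : associative (Cplus : C -> C -> C).
Proof. by move=> *; rewrite Cplus_assoc. Qed.
Fact CplusNl (x : C) : Cplus (Copp x) x = RtoC 0.
Proof. by rewrite Cplus_comm Cplus_opp_r. Qed.
HB.instance Definition _ := GRing.isZmodule.Build C
  CplusA (Cplus_comm : commutative (Cplus : C -> C -> C)) Cplus_0_l CplusNl.

Fact CmultA : associative (Cmult : C -> C -> C).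
Proof. by move=> *; rewrite Cmult_assoc. Qed.
Fact C1_neq0 : (RtoC 1 : C) != RtoC 0.
Proof. exact/eqP/C1_nz. Qed.
HB.instance Definition _ := GRing.Zmodule_isComNzRing.Build C
  CmultA (Cmult_comm : commutative (Cmult : C -> C -> C)) Cmult_1_l
  Cmult_plus_distr_r C1_neq0.

Fact CmulVf (x : C) : x != RtoC 0 -> Cmult (Cinv x) x = RtoC 1.
Proof. by move/eqP; apply: Cinv_l. Qed.
Fact Cinv0 : Cinv (RtoC 0 : C) = RtoC 0.
Proof. by apply: injective_projections; rewrite /= /Rdiv ?Rmult_0_l ?Rmult_0_r; lra. Qed.
HB.instance Definition _ := GRing.ComNzRing_isField.Build C CmulVf Cinv0.

Lemma CplusE (x y : C) : x + y = Cplus x y. Proof. by []. Qed.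
Lemma CmultE (x y : C) : x * y = Cmult x y. Proof. by []. Qed.

Lemma Cprod_big (s : seq nat) (f : nat -> C) : Cprod s f = \prod_(i <- s) f i.
Proof. by elim: s => [|i s IHs]; rewrite ?big_nil ?big_cons //= IHs. Qed.

Lemma Cprod_iota (N : nat) (f : nat -> C) : Cprod (iota 0 N) f = \prod_(i < N) f i.
Proof. by rewrite Cprod_big -(big_mkord xpredT) /index_iota subn0. Qed.

Lemma RtoC_pow (x : R) (n : nat) : RtoC (x ^ n) = RtoC x ^+ n.
Proof. by elim: n => [|n IHn] //; rewrite exprS -IHn /= RtoC_mult. Qed.

Lemma RtoC_int (z : int) : RtoC (int_to_R z) = z%:~R :> C.
Proof.
have RtoC_nat (n : nat) : RtoC (INR n) = n%:R :> C.
  by elim: n => [|n IHn] //; rewrite S_INR RtoC_plus IHn mulrSr.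
case: z => n; first by rewrite RtoC_nat.
by rewrite [in RHS]NegzE mulrNz -pmulrn -RtoC_nat -[int_to_R _]/(- INR n.+1)%R RtoC_opp.
Qed.

Lemma cisD (x y : R) : cis (x + y) = cis x * cis y :> C.
Proof. by rewrite CmultE /cis cos_plus sin_plus; apply: injective_projections => /=; lra. Qed.

Lemma cis0 : cis 0 = 1 :> C.
Proof. by rewrite /cis cos_0 sin_0. Qed.

Lemma cis_neq0 (x : R) : cis x != 0 :> C.
Proof.
apply/eqP => cx0; have := cisD x (- x); rewrite Rplus_opp_r cis0 cx0 mul0r.
exact/eqP/oner_neq0.
Qed.

Lemma cisN (x : R) : cis (- x) = (cis x)^-1 :> C.
Proof. by apply: (mulfI (cis_neq0 x)); rewrite -cisD Rplus_opp_r cis0 mulfV ?cis_neq0. Qed.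

Lemma cis_exprn (x : R) (n : nat) : cis x ^+ n = cis (INR n * x) :> C.
Proof.
elim: n => [|n IHn]; first by rewrite Rmult_0_l cis0.
by rewrite exprS IHn -cisD S_INR; congr cis; ring.
Qed.

Lemma cis_exprz (x : R) (z : int) : cis x ^ z = cis (int_to_R z * x) :> C.
Proof.
case: z => n; first by rewrite -exprnP cis_exprn.
by rewrite NegzE -exprnN cis_exprn -cisN Ropp_mult_distr_l.
Qed.

Lemma Cmod_cis (x : R) : Cmod (cis x) = 1%R.
Proof.
change (sqrt (cos x ^ 2 + sin x ^ 2) = 1%R).
by rewrite -!Rsqr_pow2 Rplus_comm sin2_cos2 sqrt_1.
Qed.

Lemma Cconj_cis (x : R) : Cconj (cis x) = (cis x)^-1 :> C.
Proof. by rewrite -cisN /Cconj /cis /= cos_neg sin_neg. Qed.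

Definition in_open_cube (n : nat) (th : nat -> R) : Prop :=
  forall i, (i < n)%N -> (- (1/2) < th i < 1/2)%R.

Lemma iint_ext (n : nat) (f g : (nat -> R) -> R) :
  (forall th, in_open_cube n th -> f th = g th) -> iint n f = iint n g.
Proof.
elim: n f g => [|n IHn] f g efg /=; first by apply: efg.
apply: RInt_ext => t; rewrite Rmin_left ?Rmax_right; try lra.
move=> t_in; apply: IHn => th th_in; apply: efg => i lt_in.
case: (Nat.eqb_spec i n) => [_|neq_in]; first lra.
by apply: th_in; move: lt_in; rewrite ltnS leq_eqVlt => /orP[/eqP|].
Qed.

Definition cis_monomial (n : nat) (e : nat -> int) (th : nat -> R) : C :=
  \prod_(i < n) cis (2 * PI * th i) ^ e i.

Lemma int_to_R_IZR (k : int) : exists z, int_to_R k = IZR z.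
Proof.
case: k => n /=; first by exists (Z.of_nat n); apply: INR_IZR_INZ.
by exists (Z.opp (Z.of_nat n.+1)); rewrite opp_IZR -INR_IZR_INZ.
Qed.

Lemma int_to_R_neq0 (k : int) : k != 0 -> int_to_R k <> 0%R.
Proof.
case: k => n k0; first by apply: not_0_INR => n0; rewrite n0 in k0.
by rewrite /int_to_R S_INR; have := pos_INR n; lra.
Qed.

(* Coquelicot parses the argument of [Re] and [Im] in [C_scope], hence the [%ring]. *)
Lemma is_RInt_Re_cis_exprz (c : C) (k : int) :
  is_RInt (fun s => Re (c * cis (2 * PI * s) ^ k)%ring) (- (1/2)) (1/2)
    (if k == 0 then Re c else 0%R).
Proof.
case: eqP => [->|/eqP k0].
  apply: (is_RInt_ext (fun _ => Re c)) => [s _|]; first by rewrite expr0z mulr1.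
  have := is_RInt_const (- (1/2)) (1/2) (Re c).
  by rewrite /scal /= /mult /=; replace (1/2 - - (1/2))%R with 1%R by field; rewrite Rmult_1_l.
have K0 := int_to_R_neq0 k0; set K := int_to_R k in K0 *.
have ReE s : Re (c * cis (2 * PI * s) ^ k)%ring =
    (Re c * cos (K * (2 * PI * s)) - Im c * sin (K * (2 * PI * s)))%R.
  by rewrite cis_exprz.
pose F s := ((Re c * sin (K * (2 * PI * s)) + Im c * cos (K * (2 * PI * s))) / (K * 2 * PI))%R.
have PI0 := PI_RGT_0.
suff FE : minus (F (1/2)%R) (F (- (1/2))%R) = 0%R.
  rewrite -[0%R in X in is_RInt _ _ _ X]FE; apply: is_RInt_derive => s _.
  - by rewrite ReE /F; auto_derive; [|field; lra].
  - apply: (continuous_ext (fun x => Re c * cos (K * (2 * PI * x)) - Im c * sin (K * (2 * PI * x)))%R).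
      by move=> x; rewrite ReE.
    by apply: ex_derive_continuous; auto_derive.
rewrite /minus /plus /opp /= /F.
have -> : (K * (2 * PI * (1/2)) = K * PI)%R by field.
have -> : (K * (2 * PI * - (1/2)) = - (K * PI))%R by field.
have [z Kz] := int_to_R_IZR k.
rewrite sin_neg cos_neg (sin_eq_0_1 (K * PI)); last by exists z; rewrite /K Kz.
by rewrite /Hierarchy.opp /=; field; split; lra.
Qed.

Lemma is_RInt_Re_cis_sum (T : Type) (r : seq T) (P : pred T) (c : T -> C) (k : T -> int) :
  is_RInt (fun s => Re (\sum_(t <- r | P t) c t * cis (2 * PI * s) ^ k t)%ring) (- (1/2)) (1/2)
    (Re (\sum_(t <- r | P t && (k t == 0)) c t)).
Proof.
elim: r => [|t r IHr].
  apply: (is_RInt_ext (fun _ => 0%R)) => [s _|]; first by rewrite big_nil.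
  by rewrite big_nil; have := is_RInt_const (- (1/2)) (1/2) 0%R; rewrite /scal /= /mult /= Rmult_0_r.
rewrite big_cons; case Pt: (P t) => /=; last first.
  by apply: (is_RInt_ext _ _ _ _ _ _ IHr) => s _; rewrite big_cons Pt.
apply: (is_RInt_ext (fun s => Re (c t * cis (2 * PI * s) ^ k t)%ring
    + Re (\sum_(t <- r | P t) c t * cis (2 * PI * s) ^ k t)%ring)%R) => [s _|].
  by rewrite big_cons Pt.
have := is_RInt_plus _ _ _ _ _ _ (@is_RInt_Re_cis_exprz (c t) (k t)) IHr.
by case: (k t == 0); rewrite /plus //= Rplus_0_l.
Qed.

Lemma iint_Re_Laurent (n : nat) (T : finType) (c : T -> C) (e : T -> nat -> int) :
  iint n (fun th => Re (\sum_t c t * cis_monomial n (e t) th)) =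
  Re (\sum_(t | all (fun i => e t i == 0) (iota 0 n)) c t).
Proof.
elim: n c => [|n IHn] c /=.
  by rewrite /cis_monomial; under eq_bigr do rewrite big_ord0 mulr1.
pose G s := \sum_(t | all (fun i => e t i == 0) (iota 0 n)) c t * cis (2 * PI * s) ^ e t n.
transitivity (RInt (fun s => Re (G s)) (- (1/2)) (1/2)).
  congr RInt; apply: functional_extensionality => s.
  rewrite /G -(IHn (fun t => c t * cis (2 * PI * s) ^ e t n)).
  congr iint; apply: functional_extensionality => th; congr Re.
  apply: eq_bigr => t _; rewrite /cis_monomial big_ord_recr /= Nat.eqb_refl mulrAC -mulrA.
  congr (_ * (_ * _)); apply: eq_bigr => i _.
  by have /Nat.eqb_neq -> : nat_of_ord i <> n by move=> i_n; have := ltn_ord i; rewrite i_n ltnn.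
have -> : \sum_(t | all (fun i => e t i == 0) (iota 0 n.+1)) c t =
          \sum_(t | all (fun i => e t i == 0) (iota 0 n) && (e t n == 0)) c t.
  by apply: eq_bigl => t; rewrite -addn1 iotaD all_cat /= andbT.
exact/is_RInt_unique/is_RInt_Re_cis_sum.
Qed.

Lemma iint_Im_Laurent (n : nat) (T : finType) (c : T -> C) (e : T -> nat -> int) :
  iint n (fun th => Im (\sum_t c t * cis_monomial n (e t) th)) =
  Im (\sum_(t | all (fun i => e t i == 0) (iota 0 n)) c t).
Proof.
have ImE (z : C) : Im z = Re (z * - Ci)%ring.
  by rewrite /Im /=; ring.
rewrite ImE mulr_suml -(iint_Re_Laurent n (fun t => c t * - Ci)).
congr iint; apply: functional_extensionality => th.
by rewrite ImE mulr_suml; congr Re; apply: eq_bigr => t _; rewrite mulrAC.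
Qed.

Lemma iint_Laurent (n : nat) (T : finType) (c : T -> C) (e : T -> nat -> int)
    (f : (nat -> R) -> C) :
  (forall th, in_open_cube n th -> f th = \sum_t c t * cis_monomial n (e t) th) ->
  (iint n (fun th => Re (f th)), iint n (fun th => Im (f th))) =
  \sum_(t | all (fun i => e t i == 0) (iota 0 n)) c t.
Proof.
move=> fE.
have iint_ReE : iint n (fun th => Re (f th)) =
                iint n (fun th => Re (\sum_t c t * cis_monomial n (e t) th)).
  by apply: iint_ext => th /fE /= ->.
have iint_ImE : iint n (fun th => Im (f th)) =
                iint n (fun th => Im (\sum_t c t * cis_monomial n (e t) th)).
  by apply: iint_ext => th /fE /= ->.
by rewrite iint_ReE iint_ImE iint_Re_Laurent iint_Im_Laurent; case: (\sum_(t | _) c t).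
Qed.

Lemma jacobi_weight_Laurent (th : R) (a b : nat) : (- (1/2) < th < 1/2)%R ->
  (cis (PI * th * (INR a - INR b)) * RtoC (Cmod (RtoC 1 + cis (2 * PI * th)) ^ (a + b)))%C =
  \sum_(i < (a + b).+1) 'C(a + b, i)%:R * cis (2 * PI * th) ^ (a%:Z - i%:Z).
Proof.
move=> th_in; rewrite -addr1_exprD_Laurent ?cis_neq0 //; set x := (PI * th)%R.
have cosx_ge0 : (0 <= cos x)%R by apply: cos_ge_0; have := PI_RGT_0; rewrite /x; nra.
have cisD1E : cis (2 * PI * th) + 1 = cis x * RtoC (2 * cos x) :> C.
  rewrite CplusE CmultE /cis /Cplus /Cmult /=.
  have -> : (2 * PI * th = 2 * x)%R by rewrite /x; ring.
  by rewrite cos_2a_cos sin_2a; apply: injective_projections => /=; ring.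
have CmodE : Cmod (RtoC 1 + cis (2 * PI * th)) = (2 * cos x)%R.
  by rewrite Cplus_comm -CplusE cisD1E CmultE Cmod_mult Cmod_cis Cmod_R Rabs_pos_eq; lra.
rewrite CmodE RtoC_pow cisD1E exprMn -CmultE mulrAC; congr (_ * _).
by rewrite !cis_exprn -cisN -cisD; congr cis; rewrite /x plus_INR; ring.
Qed.

Lemma vandermonde_factor_Laurent (al be : R) (lam : nat) :
  RtoC (Cmod (cis al - cis be)%C ^ (2 * lam)) =
  \sum_(i < 2 * lam + 1)
    ((-1) ^ (i%:Z - lam%:Z) * binZ (2 * lam) (lam%:Z + (i%:Z - lam%:Z)))%:~R
      * cis al ^ (i%:Z - lam%:Z) * cis be ^ (- (i%:Z - lam%:Z)).
Proof.
rewrite -subr_mul_subrV_Laurent ?cis_neq0 // pow_mult RtoC_pow Cmod2_conj.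
by rewrite Cminus_conj !Cconj_cis.
Qed.

Section Integrand.
Variables N a b lam : nat.
Local Notation term := (family N lam * {ffun 'I_N -> 'I_(a + b).+1})%type.

Definition pair_coef (f : family N lam) : int :=
  (-1) ^ (\sum_(p : pairs N) Ipair f p) * \prod_(p : pairs N) binZ (2 * lam) (lam%:Z + Ipair f p).

Definition term_coef (t : term) : int := pair_coef t.1 * \prod_(k < N) 'C(a + b, t.2 k)%:Z.

Definition term_exponent (t : term) (i : nat) : int :=
  if insub i is Some k then a%:Z - (t.2 k)%:Z + Ival_rowsum t.1 k else 0.

Definition zero_exponent_choices (f : family N lam) (k : 'I_N) : pred 'I_(a + b).+1 :=
  [pred x : 'I_(a + b).+1 | a%:Z - x%:Z + Ival_rowsum f k == 0].

Lemma prod_pair_coef (f : family N lam) :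
  \prod_(p : pairs N) ((-1) ^ Ipair f p * binZ (2 * lam) (lam%:Z + Ipair f p)) = pair_coef f.
Proof.
rewrite big_split /=; congr (_ * _); apply/esym/big_morph => [m n|//].
by rewrite exprzDr // unitrN1.
Qed.

Lemma constant_term_Msum :
  \sum_(t : term | all (fun i => term_exponent t i == 0) (iota 0 N)) term_coef t = Msum N a b lam.
Proof.
have exponentsE t : all (fun i => term_exponent t i == 0) (iota 0 N) =
    [forall k, t.2 k \in zero_exponent_choices t.1 k].
  apply/allP/forallP => [exps0 k|exps0 i].
    by rewrite inE; have := exps0 k; rewrite mem_iota /= ltn_ord /term_exponent valK; apply.
  by rewrite mem_iota /= => lt_iN; rewrite /term_exponent insubT; apply: exps0.
under eq_bigl do rewrite exponentsE.
rewrite -(pair_big_dep xpredT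
  (fun f (j : {ffun 'I_N -> 'I_(a + b).+1}) => [forall k, j k \in zero_exponent_choices f k])
  (fun f j => term_coef (f, j))) /=.
apply: eq_bigr => f _; rewrite /term_coef /= -big_distrr; congr (_ * _).
transitivity (\prod_k \sum_(x in zero_exponent_choices f k) 'C(a + b, x)%:Z).
  by rewrite bigA_distr_big_dep; apply: eq_bigl => j; apply/forallP/familyP.
apply: eq_bigr => k _; rewrite -sum_binomial_fiber; apply: eq_bigl => x.
by rewrite inE addrAC subr_eq0 eq_sym.
Qed.

Section Expansion.
Variable th : nat -> R.
Hypothesis th_in : in_open_cube N th.
Local Notation z k := (cis (2 * PI * th k)).

Lemma prod_jacobi_weight_Laurent :
  Cprod (iota 0 N) (fun l =>
    cis (PI * th l * (INR a - INR b)) * RtoC (Cmod (RtoC 1 + z l) ^ (a + b)))%C =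
  \sum_(j : {ffun 'I_N -> 'I_(a + b).+1})
     \prod_(k < N) ('C(a + b, j k)%:R * z k ^ (a%:Z - (j k)%:Z)).
Proof.
rewrite Cprod_iota.
under eq_bigr => k _ do rewrite (jacobi_weight_Laurent _ _ (th_in (ltn_ord k))).
exact: bigA_distr_bigA.
Qed.

Lemma prod_vandermonde_Laurent :
  Cprod (iota 0 N) (fun k => Cprod (iota k.+1 (N - k.+1)) (fun l =>
    RtoC (Cmod (z k - z l)%C ^ (2 * lam)))) =
  \sum_(f : family N lam) \prod_(p : pairs N)
    (((-1) ^ Ipair f p * binZ (2 * lam) (lam%:Z + Ipair f p))%:~R
      * z (val p).1 ^ Ipair f p * z (val p).2 ^ (- Ipair f p)).
Proof.
rewrite Cprod_iota.
under eq_bigr => k _ do rewrite Cprod_big -[iota _ _]/(index_iota k.+1 N) big_geq_mkord.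
rewrite -(prod_pairs (fun k l => RtoC (Cmod (z k - z l)%C ^ (2 * lam)))).
under eq_bigr => p _ do rewrite vandermonde_factor_Laurent.
exact: bigA_distr_bigA.
Qed.

Lemma cis_monomial_term_exponent (t : term) :
  cis_monomial N (term_exponent t) th =
  \prod_(k < N) z k ^ (a%:Z - (t.2 k)%:Z) *
  \prod_(p : pairs N) (z (val p).1 ^ Ipair t.1 p * z (val p).2 ^ (- Ipair t.1 p)).
Proof.
rewrite -(@prod_exprz_Ival_rowsum _ _ t.1 _ (fun k => z k)) => [|k]; last exact: cis_neq0.
rewrite -big_split; apply: eq_bigr => k _.
by rewrite /term_exponent valK expfzDr ?cis_neq0.
Qed.

Lemma integrand_Laurent :
  integrand N a b lam th = \sum_(t : term) (term_coef t)%:~R * cis_monomial N (term_exponent t) th.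
Proof.
rewrite /integrand -CmultE prod_jacobi_weight_Laurent prod_vandermonde_Laurent mulr_suml.
under eq_bigr do rewrite mulr_sumr.
rewrite exchange_big pair_bigA; apply: eq_bigr => -[f j] _ /=.
rewrite cis_monomial_term_exponent /term_coef -prod_pair_coef intrM !rmorph_prod /=.
under [X in _ * X = _]eq_bigr do rewrite -mulrA.
by rewrite !big_split /= mulrACA [X in X * _ = _]mulrC.
Qed.

End Expansion.

End Integrand.

Theorem proposition4 (a b lam N : nat) :
  MN N a b lam = RtoC (int_to_R (Msum N a b lam)).
Proof.
rewrite /MN (iint_Laurent (@integrand_Laurent N a b lam)).
by rewrite -rmorph_sum constant_term_Msum RtoC_int.
Qed.
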